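(* Consider the setting described in the context, fix $\varepsilon_{\mathrm{req}}\in[\varepsilon_{\min},+\infty)$, and let $(\boldsymbol{K}^*,\boldsymbol{B}^* )$ be an optimal social state, i.e., a maximizer of $W_{\mathrm{MoTS}}(\boldsymbol{K},\boldsymbol{B})$ over social states with $\sum_iK_i\ge1$ and $\varepsilon(\boldsymbol{K})\le\varepsilon_{\mathrm{req}}$. Then $W_{\mathrm{MoTS}}(\boldsymbol{K}^*,\boldsymbol{B}^* )\ge W_{\mathrm{FL}}(\boldsymbol{K})$ for every participation vector $\boldsymbol{K}$ with $\varepsilon(\boldsymbol{K})=\varepsilon(\boldsymbol{K}^* )$; in particular $W_{\mathrm{MoTS}}(\boldsymbol{K}^*,\boldsymbol{B}^* )$ is at least the maximum social welfare achievable in the standard federated learning framework with model performance $\varepsilon(\boldsymbol{K}^* )$.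
   Context: There are $N$ clients partitioned into $I$ types; type $i$ has $N_i\ge1$ clients ($\sum_iN_i=N$), data size $D_i>0$ with $D_1\le\dots\le D_I$, participation cost $C_i$ with $C_1\le\dots\le C_I$; feature dimension $d\ge1$, data variance $\gamma^2>0$, client variance $\sigma^2\ge0$. A social state $(\boldsymbol{K},\boldsymbol{B})$ consists of nonnegative integers with $K_i+B_i\le N_i$ ($K_i$ type-$i$ training participants, $B_i$ type-$i$ model buyers); a participation vector $\boldsymbol{K}$ has integers $0\le K_i\le N_i$. For $K=\sum_iK_i\ge1$, $\varepsilon(\boldsymbol{K})=\frac{d\gamma^2}{K^2}\sum_i\frac{K_i}{D_i}+\frac{K-1}{K}\sigma^2$. Utility $U(\varepsilon)\ge0$ with $U'\le0$ and $(\varepsilon-\sigma^2)U''+2U'\ge0$ for $\varepsilon\ne\sigma^2$. Model-trading-and-sharing welfare: $W_{\mathrm{MoTS}}(\boldsymbol{K},\boldsymbol{B})=\sum_i[K_i(U(\varepsilon(\boldsymbol{K}))-C_i)+B_iU(\varepsilon(\boldsymbol{K}))]$. Standard federated learning welfare (only participants obtain the model): $W_{\mathrm{FL}}(\boldsymbol{K})=\sum_iK_i(U(\varepsilon(\boldsymbol{K}))-C_i)$. $\varepsilon_{\min}$ is the minimum achievable generalization error. *)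

From HB Require Import structures.
From mathcomp Require Import all_boot all_order all_algebra.
From mathcomp Require Import all_classical all_reals all_analysis.
Set Implicit Arguments. Unset Strict Implicit. Unset Printing Implicit Defensive.
Import Order.TTheory GRing.Theory Num.Theory.
Local Open Scope ring_scope.

Definition Ktot (I : nat) (K : 'I_I -> nat) : nat := (\sum_(i < I) K i)%N.

(* Generalization error eps(K) (meaningful for Ktot K >= 1). *)
Definition eps (R : realType) (I : nat) (D : 'I_I -> R) (d : nat) (gamma2 sigma2 : R)
  (K : 'I_I -> nat) : R :=
  d%:R * gamma2 / ((Ktot K)%:R ^+ 2) * (\sum_(i < I) (K i)%:R / D i)
  + ((Ktot K)%:R - 1) / (Ktot K)%:R * sigma2.

Definition W_MoTS (R : realType) (I : nat) (D C : 'I_I -> R) (d : nat)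
  (gamma2 sigma2 : R) (U : R -> R) (K B : 'I_I -> nat) : R :=
  \sum_(i < I) ((K i)%:R * (U (eps D d gamma2 sigma2 K) - C i)
                + (B i)%:R * U (eps D d gamma2 sigma2 K)).

Definition W_FL (R : realType) (I : nat) (D C : 'I_I -> R) (d : nat)
  (gamma2 sigma2 : R) (U : R -> R) (K : 'I_I -> nat) : R :=
  \sum_(i < I) (K i)%:R * (U (eps D d gamma2 sigma2 K) - C i).

Definition participation (I : nat) (N : 'I_I -> nat) (K : 'I_I -> nat) : Prop :=
  forall i, (K i <= N i)%N.

Definition social_state (I : nat) (N : 'I_I -> nat) (K B : 'I_I -> nat) : Prop :=
  forall i, (K i + B i <= N i)%N.

From HB Require Import structures.
From mathcomp Require Import all_boot all_order all_algebra.
From mathcomp Require Import all_classical all_reals all_analysis.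
Import Order.TTheory GRing.Theory Num.Theory.
Local Open Scope ring_scope.

Lemma W_FL_MoTS_no_buyers (R : realType) (I : nat) (D C : 'I_I -> R) (d : nat)
    (gamma2 sigma2 : R) (U : R -> R) (K : 'I_I -> nat) :
  W_FL D C d gamma2 sigma2 U K = W_MoTS D C d gamma2 sigma2 U K (fun=> 0%N).
Proof. by apply: eq_bigr => i _; rewrite mul0r addr0. Qed.

Lemma participation_social_state_no_buyers (I : nat) (N K : 'I_I -> nat) :
  participation N K -> social_state N K (fun=> 0%N).
Proof. by move=> HK i; rewrite addn0. Qed.

Theorem proposition3 (R : realType) (I : nat) (N : 'I_I -> nat)
  (D C : 'I_I -> R) (d : nat) (gamma sigma : R) (U : R -> R)
  (eps_min eps_req : R) (Kstar Bstar : 'I_I -> nat) :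
  (forall i, (1 <= N i)%N) ->
  (forall i, 0 < D i) ->
  (forall i j : 'I_I, (i <= j)%N -> D i <= D j) ->
  (forall i j : 'I_I, (i <= j)%N -> C i <= C j) ->
  (1 <= d)%N ->
  0 < gamma ^+ 2 ->
  0 <= sigma ^+ 2 ->
  (forall x, 0 <= U x) ->
  (forall x, derivable U x 1) ->
  (forall x, derivable (derive1 U) x 1) ->
  (forall x, derive1 U x <= 0) ->
  (forall x, x != sigma ^+ 2 ->
     0 <= (x - sigma ^+ 2) * derive1 (derive1 U) x + 2 * derive1 U x) ->
  (* eps_min is the minimum achievable generalization error *)
  (forall K, participation N K -> (1 <= Ktot K)%N ->
     eps_min <= eps D d (gamma ^+ 2) (sigma ^+ 2) K) ->
  (exists K, [/\ participation N K, (1 <= Ktot K)%N &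
     eps D d (gamma ^+ 2) (sigma ^+ 2) K = eps_min]) ->
  eps_min <= eps_req ->
  (* (Kstar, Bstar) is an optimal social state *)
  social_state N Kstar Bstar ->
  (1 <= Ktot Kstar)%N ->
  eps D d (gamma ^+ 2) (sigma ^+ 2) Kstar <= eps_req ->
  (forall K B, social_state N K B -> (1 <= Ktot K)%N ->
     eps D d (gamma ^+ 2) (sigma ^+ 2) K <= eps_req ->
     W_MoTS D C d (gamma ^+ 2) (sigma ^+ 2) U K B
       <= W_MoTS D C d (gamma ^+ 2) (sigma ^+ 2) U Kstar Bstar) ->
  forall K, participation N K -> (1 <= Ktot K)%N ->
    eps D d (gamma ^+ 2) (sigma ^+ 2) K = eps D d (gamma ^+ 2) (sigma ^+ 2) Kstar ->
    W_FL D C d (gamma ^+ 2) (sigma ^+ 2) U K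
      <= W_MoTS D C d (gamma ^+ 2) (sigma ^+ 2) U Kstar Bstar.
Proof.
move=> _ _ _ _ _ _ _ _ _ _ _ _ _ _ _ _ _ Kstar_req optimal K HK HK1 eqK.
rewrite W_FL_MoTS_no_buyers; apply: optimal HK1 _.
- exact: participation_social_state_no_buyers.
- by rewrite eqK.
Qed.
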